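(* Let $p\in\mathbb N$. For each $n \in \mathbb N$ and $q \in \{0,1,\dots,\lfloor pn/(p+1)\rfloor\}$, $$\sum_{\mathbf m \in S_{n,q,p}} \pi_{\mathbf m} = \sum_{\substack{\mathbf k=(k_1,\dots,k_{p+1})\in\{0,1,2,\dots\}^{p+1}\\ \sum_{j=1}^{p+1} j k_j = n,\ \sum_{j=1}^{p+1} k_j = n-q}} \frac{1}{k_1!\,k_2!\cdots k_{p+1}!\; 2^{k_2}\cdots (p+1)^{k_{p+1}}}.$$
   Context: $S_{n,q,p} = \{\mathbf m=(m_1,\dots,m_{n-q}) \in \{0,1,\dots,p\}^{n-q} : m_1+\cdots+m_{n-q}=q\}$, and $\pi_{\mathbf m} = \prod_{i=1}^{n-q}[m_i+\cdots+m_{n-q} + (n-q-i+1)]^{-1}$. *)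

From mathcomp Require Export all_boot all_order all_algebra.
Set Implicit Arguments. Unset Strict Implicit. Unset Printing Implicit Defensive.
Export GRing.Theory Num.Theory.

(* S_{n,q,p}: vectors m = (m_1,...,m_{n-q}) with entries in {0,...,p}
   (encoded as 'I_p.+1) summing to q.  Indices are 0-based: m_{i+1} = m i. *)
Definition in_S (n q p : nat) (m : {ffun 'I_(n - q) -> 'I_p.+1}) : bool :=
  (\sum_(i < n - q) (m i : nat) == q)%N.

(* pi_m = prod_{i=1}^{n-q} [m_i + ... + m_{n-q} + (n-q-i+1)]^{-1};
   with 0-based index i (= paper's i-1) the factor is
   [sum_{j >= i} m_j + (n - q - i)]^{-1}. *)
Definition pi_m (n q p : nat) (m : {ffun 'I_(n - q) -> 'I_p.+1}) : rat :=
  \prod_(i < n - q)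
     (((\sum_(j < n - q | (i <= j)%N) (m j : nat)) + (n - q - i))%N%:R)^-1.

(* Condition on k = (k_1,...,k_{p+1}) (0-based: k_{j+1} = k j):
   sum_j j k_j = n and sum_j k_j = n - q. *)
Definition k_ok (n q p : nat) (k : {ffun 'I_p.+1 -> 'I_n.+1}) : bool :=
  ((\sum_(j < p.+1) j.+1 * (k j : nat) == n) &&
   (\sum_(j < p.+1) (k j : nat) == n - q))%N.

Definition k_weight (n p : nat) (k : {ffun 'I_p.+1 -> 'I_n.+1}) : rat :=
  ((\prod_(j < p.+1) ((k j)`! * j.+1 ^ (k j)))%N%:R)^-1.

(* Both sides of the identity are evaluations of one rational function
   cyc p N n, defined by the recurrence
     cyc p 0 n      = [n = 0],
     cyc p N.+1 n   = 1/n * sum_(1 <= t <= p+1, t <= n) cyc p N (n - t)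
   (n! * cyc p N n counts permutations of n points with N cycles, all of
   length at most p+1, but only the recurrence is used).

   - Left side.  Generalising S_{n,q,p} to vectors of any length N with any
     entry sum s, peeling off the first entry m_1 = a turns the first factor
     of pi_m into 1/(s + N) and the remaining product into the same sum for
     length N and entry sum s - a; hence the sum equals cyc p N (s + N).
   - Right side.  For vectors k with sum_j j k_j = n and sum_j k_j = N + 1,
     multiply the weight by n = sum_j j k_j; the j-th term is, after
     decrementing k_j, the weight of a vector for (n - j, N).  Hence
     n * (right side at (n, N+1)) = sum_j (right side at (n - j, N)).
   With N = n - q and s = q both sides equal cyc p (n - q) n. *)

From mathcomp Require Import all_boot all_order all_algebra.
From mathcomp Require Import zify ring.
Set Implicit Arguments. Unset Strict Implicit.
Local Open Scope ring_scope.

(* The common recurrence; steps t.+1 range over the cycle lengths 1..p+1. *)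
Fixpoint cyc (p N n : nat) : rat :=
  if N is N'.+1 then n%:R^-1 * \sum_(t < p.+1 | (t < n)%N) cyc p N' (n - t.+1)
  else (n == 0%N)%:R.

(* N cycles need at least N points. *)
Lemma cyc_small p N n : (n < N)%N -> cyc p N n = 0.
Proof.
elim: N n => [//|N IH] n /= ltnN.
by rewrite big1 ?mulr0 // => t ltn; apply: IH; lia.
Qed.

Section FfunCons.
Variable T : finType.

Definition fcons N (a : T) (g : {ffun 'I_N -> T}) : {ffun 'I_N.+1 -> T} :=
  [ffun i => if unlift ord0 i is Some j then g j else a].

Lemma fcons0 N a (g : {ffun 'I_N -> T}) : fcons a g ord0 = a.
Proof. by rewrite ffunE unlift_none. Qed.

Lemma fconsS N a (g : {ffun 'I_N -> T}) j : fcons a g (lift ord0 j) = g j.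
Proof. by rewrite ffunE liftK. Qed.

Lemma sum_ffunS N (F : {ffun 'I_N.+1 -> T} -> rat) :
  \sum_(f : {ffun 'I_N.+1 -> T}) F f =
  \sum_(a : T) \sum_(g : {ffun 'I_N -> T}) F (fcons a g).
Proof.
rewrite pair_big /=.
rewrite (reindex (fun x : T * {ffun 'I_N -> T} => fcons x.1 x.2)) //.
exists (fun f : {ffun 'I_N.+1 -> T} => (f ord0, [ffun j => f (lift ord0 j)])).
  move=> [a g] _ /=; rewrite fcons0; congr pair; apply/ffunP => j.
  by rewrite ffunE fconsS.
move=> f _; apply/ffunP => i; rewrite ffunE.
by case: unliftP => [j ->|->]; rewrite ?ffunE.
Qed.

End FfunCons.

(* The left side for vectors of length N with entries in {0..p} summing to s;
   for N = n - q and s = q it is the left side of the theorem. *)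
Definition lhs_sum (p N s : nat) : rat :=
  \sum_(m : {ffun 'I_N -> 'I_p.+1} | (\sum_(i < N) (m i : nat) == s)%N)
   \prod_(i < N) (((\sum_(j < N | (i <= j)%N) (m j : nat)) + (N - i))%N%:R)^-1.

Lemma lhs_sum0 p s : lhs_sum p 0 s = (s == 0%N)%:R.
Proof.
rewrite /lhs_sum; case: s => [|s]; last first.
  by rewrite big_pred0 // => m; rewrite big_ord0.
rewrite (big_pred1 [ffun i => ord0]) ?big_ord0 // => m.
by rewrite big_ord0 eqxx; apply/esym/eqP/ffunP => -[].
Qed.

Lemma fcons_tail_sum p N a (g : {ffun 'I_N -> 'I_p.+1}) (i : 'I_N) :
  (\sum_(j < N.+1 | (lift ord0 i <= j)%N) (fcons a g j : nat)
   = \sum_(j < N | (i <= j)%N) (g j : nat))%N.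
Proof.
rewrite big_mkcond big_ord_recl /= -big_mkcond /=.
by apply: eq_big => [j|j _]; rewrite ?fconsS.
Qed.

(* Peeling off the first entry a of m: the first factor of the product is
   1/(s + N + 1), the others form the product for the remaining entries. *)
Lemma lhs_sum_rec p N s :
  lhs_sum p N.+1 s =
  (s + N.+1)%N%:R^-1 * \sum_(a < p.+1 | (a <= s)%N) lhs_sum p N (s - a)%N.
Proof.
rewrite /lhs_sum big_mkcond /= sum_ffunS mulr_sumr; rewrite [RHS]big_mkcond.
apply: eq_bigr => a _.
have sum_g (g : {ffun 'I_N -> 'I_p.+1}) :
    (\sum_(i < N) (fcons a g (lift ord0 i) : nat) = \sum_(i < N) (g i : nat))%N.
  by apply: eq_bigr => i _; rewrite fconsS.
case: (leqP a s) => [les|lts]; last first.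
  apply: big1 => g _; rewrite big_ord_recl fcons0 sum_g ifF //.
  by apply/negbTE; lia.
rewrite mulr_sumr [RHS]big_mkcond; apply: eq_bigr => g _.
rewrite big_ord_recl fcons0 sum_g.
have -> : ((a + \sum_(i < N) g i)%N == s) = ((\sum_(i < N) g i)%N == s - a)%N.
  by apply/eqP/eqP; lia.
case: eqP => [sum_gE|//].
rewrite big_ord_recl (eq_bigl xpredT) // big_ord_recl fcons0 sum_g sum_gE /=.
rewrite subn0 (subnKC les); congr (_ * _).
by apply: eq_bigr => i _; rewrite fcons_tail_sum.
Qed.

(* The left side solves the recurrence: missing summands t > s vanish by
   cyc_small. *)
Lemma lhs_sum_cyc p N s : lhs_sum p N s = cyc p N (s + N).
Proof.
elim: N s => [|N IH] s; first by rewrite lhs_sum0 addn0.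
rewrite lhs_sum_rec /= addnS; congr (_ * _).
rewrite [RHS]big_mkcond [LHS]big_mkcond; apply: eq_bigr => t _.
rewrite IH; case: ifP => les; case: ifP => ltsN //; try lia.
- by congr (cyc _ _ _); lia.
- by rewrite cyc_small //; lia.
Qed.

(* Vectors
   k = (k_1..k_{p+1}) have entries bounded by b; the bound is harmless as
   long as n <= b.  For b = n and N = n - q this is the theorem's right side. *)
Section RightSide.
Variables p b : nat.
Implicit Types (k : {ffun 'I_p.+1 -> 'I_b.+1}) (j : 'I_p.+1).

Definition cycle_type (n N : nat) k : bool :=
  ((\sum_(j < p.+1) j.+1 * k j == n) && (\sum_(j < p.+1) (k j : nat) == N))%N.

Definition rhs_sum (n N : nat) : rat := \sum_(k | cycle_type n N k) k_weight k.

Definition upd k j (x : nat) : {ffun 'I_p.+1 -> 'I_b.+1} :=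
  [ffun i => if i == j then inord x else k i].

Lemma upd_at k j x : (x <= b)%N -> upd k j x j = x :> nat.
Proof. by move=> leb; rewrite ffunE eqxx inordK. Qed.

Lemma upd_overflow k j : upd k j b.+1 j = 0 :> nat.
Proof. by rewrite ffunE eqxx /inord /insubd insubF //= ltnn. Qed.

Lemma upd_id k j : upd k j (k j) = k.
Proof.
by apply/ffunP => i; rewrite ffunE; case: eqP => // ->; rewrite inord_val.
Qed.

Lemma upd_upd k j x y : upd (upd k j x) j y = upd k j y.
Proof. by apply/ffunP => i; rewrite !ffunE; case: eqP. Qed.

Lemma sum_upd (c : 'I_p.+1 -> nat) k j x : (x <= b)%N ->
  (\sum_(i < p.+1) c i * upd k j x i + c j * k j
   = \sum_(i < p.+1) c i * k i + c j * x)%N.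
Proof.
move=> leb; rewrite (bigD1 j) // [in RHS](bigD1 j) //= upd_at //.
rewrite (eq_bigr (fun i => c i * k i)%N); first lia.
by move=> i /negbTE neij; rewrite ffunE neij.
Qed.

Lemma prod_upd (g : 'I_p.+1 -> nat -> nat) k j x : (x <= b)%N ->
  (\prod_(i < p.+1) g i (upd k j x i) * g j (k j)
   = \prod_(i < p.+1) g i (k i) * g j x)%N.
Proof.
move=> leb; rewrite (bigD1 j) // [in RHS](bigD1 j) //= upd_at //.
rewrite (eq_bigr (fun i => g i (k i))); first by ring.
by move=> i /negbTE neij; rewrite ffunE neij.
Qed.

Lemma part_le k j : (j.+1 * k j <= \sum_(i < p.+1) i.+1 * k i)%N.
Proof. by rewrite (bigD1 j) //= leq_addr. Qed.

Lemma entry_le k j : (k j <= \sum_(i < p.+1) i.+1 * k i)%N.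
Proof. exact: leq_trans (leq_pmull _ _) (part_le k j). Qed.

Lemma k_weight_incr k j : (k j < b)%N ->
  (j.+1 * (k j).+1)%:R * k_weight (upd k j (k j).+1) = k_weight k.
Proof.
move=> ltb; rewrite /k_weight.
set k' := upd k j (k j).+1.
have denomE : (\prod_(i < p.+1) ((k' i)`! * i.+1 ^ k' i)
               = (j.+1 * (k j).+1) * \prod_(i < p.+1) ((k i)`! * i.+1 ^ k i))%N.
  have gt0 : (0 < (k j)`! * j.+1 ^ k j)%N by rewrite muln_gt0 fact_gt0 expn_gt0.
  apply/eqP; rewrite -(eqn_pmul2r gt0).
  rewrite (prod_upd (fun i y => y`! * i.+1 ^ y)%N) // factS expnS.
  by apply/eqP; ring.
rewrite denomE [X in _ * X^-1]natrM invfM mulrA divff ?mul1r //.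
by rewrite pnatr_eq0 muln_eq0.
Qed.

Lemma cycle_type_incr n N k j : (k j < b)%N -> (j.+1 <= n)%N ->
  cycle_type n N.+1 (upd k j (k j).+1) = cycle_type (n - j.+1) N k.
Proof.
move=> ltb lejn; have wsumE := sum_upd (fun i => i.+1) k j ltb.
have sumE := sum_upd (fun=> 1%N) k j ltb; rewrite !mul1n in sumE.
have sum1 (f : {ffun 'I_p.+1 -> 'I_b.+1}) :
    (\sum_(i < p.+1) 1 * f i = \sum_(i < p.+1) f i)%N.
  by apply: eq_bigr => i _; rewrite mul1n.
rewrite !sum1 in sumE; rewrite /cycle_type.
by apply/idP/idP => /andP[/eqP ? /eqP ?]; apply/andP; split; apply/eqP; lia.
Qed.

(* The j-th summand of n * rhs_sum n N.+1: removing one part of size j.+1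
   is a bijection onto the cycle types of n - j.+1 with N parts. *)
Lemma rhs_sum_part n N j : (j.+1 <= n)%N -> (n <= b)%N ->
  \sum_(k | cycle_type n N.+1 k) (j.+1 * k j)%:R * k_weight k
  = rhs_sum (n - j.+1) N.
Proof.
move=> lejn lenb.
(* Cycle types of n - j.+1 have k_j < b, so k_j can be incremented. *)
have kj_lt k : cycle_type (n - j.+1) N k -> (k j < b)%N.
  by case/andP => /eqP wsumE _; have := entry_le k j; rewrite wsumE; lia.
rewrite (bigID (fun k => 0 < k j)%N) /= [X in _ + X]big1 ?addr0; last first.
  by move=> k /andP[_]; rewrite lt0n negbK => /eqP ->; rewrite muln0 mul0r.
rewrite (reindex_onto (fun k => upd k j (k j).+1) (fun k => upd k j (k j).-1));
  rewrite /=; last first.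
  move=> k /andP[_ kj_gt0]; rewrite upd_upd upd_at ?prednK ?upd_id //.
  by rewrite (leq_trans (leq_pred _)) // -ltnS.
have predE k : [&& cycle_type n N.+1 (upd k j (k j).+1),
                   (0 < upd k j (k j).+1 j)%N &
                   upd (upd k j (k j).+1) j (upd k j (k j).+1 j).-1 == k]
               = cycle_type (n - j.+1) N k.
  case: (ltnP (k j) b) => [ltb|leb].
    by rewrite upd_at // upd_upd /= upd_id eqxx andbT cycle_type_incr.
  have kjE : k j = b :> nat by apply/anti_leq; rewrite leb -ltnS ltn_ord.
  rewrite kjE upd_overflow andbF /=; apply/esym/negP => /kj_lt.
  by rewrite kjE ltnn.
apply: eq_big => [k|k]; first by rewrite -andbA predE.
by rewrite -andbA predE => /kj_lt ltb; rewrite upd_at // k_weight_incr.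
Qed.

(* Multiplying by n = sum_j j.+1 * k_j and summing rhs_sum_part over j. *)
Lemma rhs_sum_rec n N : (0 < n)%N -> (n <= b)%N ->
  n%:R * rhs_sum n N.+1 = \sum_(j < p.+1 | (j < n)%N) rhs_sum (n - j.+1) N.
Proof.
move=> n_gt0 lenb; rewrite /rhs_sum mulr_sumr.
rewrite (eq_bigr (fun k => \sum_(j < p.+1) (j.+1 * k j)%:R * k_weight k));
  last by move=> k /andP[/eqP wsumE _]; rewrite -{1}wsumE natr_sum mulr_suml.
rewrite exchange_big /= [RHS]big_mkcond /=; apply: eq_bigr => j _.
case: ifP => ltjn; first exact: rhs_sum_part.
(* A part larger than n cannot occur. *)
apply: big1 => k /andP[/eqP wsumE _].
suff -> : k j = 0 :> nat by rewrite muln0 mul0r.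
have := part_le k j; rewrite wsumE; apply: contraTeq; rewrite -lt0n => kj_gt0.
by rewrite -ltnNge (leq_trans _ (leq_pmulr _ kj_gt0)) // ltnNge ltjn.
Qed.

Lemma rhs_sum0 n : rhs_sum n 0 = (n == 0%N)%:R.
Proof.
have zero_iff k :
    ((\sum_(j < p.+1) (k j : nat) == 0) = (k == [ffun => ord0]))%N.
  rewrite sum_nat_eq0; apply/forallP/eqP => [k0|-> i]; last by rewrite ffunE.
  by apply/ffunP => i; rewrite ffunE; apply: val_inj; apply/eqP/k0.
rewrite /rhs_sum; case: n => [|n].
  rewrite (big_pred1 [ffun => ord0]) => [|k]; last first.
    rewrite /cycle_type /= zero_iff andbC.
    have [->|//] := eqVneq k [ffun => ord0].
    by rewrite /= big1 ?eqxx // => i _; rewrite ffunE muln0.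
  by rewrite /k_weight big1 ?invr1 // => i _; rewrite ffunE.
rewrite big_pred0 // => k; rewrite /cycle_type /= zero_iff andbC.
have [->|//] := eqVneq k [ffun => ord0].
by rewrite big1 // => i _; rewrite ffunE muln0.
Qed.

Lemma rhs_sum_cyc n N : (n <= b)%N -> rhs_sum n N = cyc p N n.
Proof.
elim: N n => [|N IH] [|n] lenb; rewrite ?rhs_sum0 //.
  (* Positive parts cannot sum to 0. *)
  rewrite /= invr0 mul0r /rhs_sum big_pred0 // => k.
  apply/negbTE/andP => -[/eqP wsum0 /eqP sumN].
  have : (\sum_(i < p.+1) (k i : nat) <= \sum_(i < p.+1) i.+1 * k i)%N.
    by apply: leq_sum => i _; rewrite leq_pmull.
  by rewrite wsum0 sumN.
apply: (mulfI (_ : n.+1%:R != 0 :> rat)); first by rewrite pnatr_eq0.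
rewrite rhs_sum_rec //= mulrA mulfV ?pnatr_eq0 // mul1r.
by apply: eq_bigr => t ltt; apply: IH; lia.
Qed.

End RightSide.

Theorem mainTheorem8 (p n q : nat) :
  (q <= (p * n) %/ p.+1)%N ->
  \sum_(m : {ffun 'I_(n - q) -> 'I_p.+1} | in_S m) pi_m m
  = \sum_(k : {ffun 'I_p.+1 -> 'I_n.+1} | k_ok q k) k_weight k.
Proof.
move=> le_q; have le_qn : (q <= n)%N.
  rewrite (leq_trans le_q) // -{2}(mulKn n (ltn0Sn p)) leq_div2r //.
  by rewrite leq_mul2r leqnSn orbT.
transitivity (lhs_sum p (n - q) q); first by [].
transitivity (rhs_sum p n n (n - q)); last by [].
by rewrite lhs_sum_cyc rhs_sum_cyc // subnKC.
Qed.
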